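(* Let $A_n=1$ if $n=2^{k+1}-2$ for some integer $k\ge0$ and $A_n=0$ otherwise, let $D(n)=\det\left(A_{i+j}\right)_{i,j=0}^{n-1}$ for $n\ge1$, $D(0)=1$ (it is known that $D(n)\in\{1,-1\}$), and let $T_n=\frac{D(n)D(n+2)}{D(n+1)^2}=D(n)D(n+2)$ for $n\ge0$. Then $T_0=1$, $T_1=-1$, and $$T_{2n}=T_{2n-1}T_{n-1}\quad(n\ge1),\qquad T_{2n+1}=-T_{2n}\quad(n\ge0).$$ *)

From mathcomp Require Import all_boot all_order all_algebra.
From mathcomp Require Import zify.
Set Implicit Arguments. Unset Strict Implicit. Unset Printing Implicit Defensive.
Import Order.TTheory GRing.Theory Num.Theory.
Local Open Scope ring_scope.

(* isA n  <=>  n = 2^(k+1) - 2 for some k >= 0.  Any such k satisfies k <= n,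
   so the bounded finite search is equivalent (see isAP below). *)
Definition isA (n : nat) : bool := [exists k : 'I_n.+1, n == (2 ^ k.+1 - 2)%N].

Lemma isAP (n : nat) : reflect (exists k : nat, n = (2 ^ k.+1 - 2)%N) (isA n).
Proof.
apply: (iffP existsP) => [[k /eqP ->]|[k ->]]; first by exists k.
have hk : (k < (2 ^ k.+1 - 2).+1)%N.
  have h1 : (k < 2 ^ k)%N by apply: ltn_expl.
  rewrite expnS mul2n -addnn.
  have h2 : (1 <= 2 ^ k)%N by rewrite expn_gt0.
  lia.
by exists (Ordinal hk).
Qed.

Definition A (n : nat) : int := if isA n then 1 else 0.

Definition D (n : nat) : int := \det (\matrix_(i < n, j < n) A (i + j)%N).

(* T_n = D(n) D(n+2)  (= D(n)D(n+2)/D(n+1)^2 since D(n+1) = +-1) *)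
Definition T (n : nat) : int := D n * D n.+2.

(* The sequence A vanishes at odd indices and satisfies A (2k+2) = A k.  Listing
   the even indices before the odd ones, the Hankel matrix of A becomes block
   diagonal, so D n = Deven (ceil (n/2)) * D (floor (n/2)), where Deven is the
   Hankel determinant of the even part Aeven k = A (2k).  Since Aeven vanishes
   at the indices 2k+2 and Aeven (2k+1) = Aeven k, Aeven (k+1) = A k, the same
   reordering makes the Hankel matrices of Aeven block anti-triangular, giving
   Deven (2m) = (-1)^m Deven m ^ 2 and Deven (2m+1) = (-1)^m D m ^ 2.  By strong
   induction D n ^ 2 = 1 and Deven n = (-1)^(floor (n/2)); the recurrences for T
   then follow by substituting D (2n) = Deven n D n and
   D (2n+1) = Deven (n+1) D n. *)

From mathcomp Require Import all_boot all_order all_algebra zify ring perm.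
Import GRing.Theory.
Local Open Scope ring_scope.

Section BlockDeterminants.
Context {R : comPzRingType}.

Lemma det_mx_reindex n (F : nat -> nat -> R) (g : nat -> nat) :
  (forall i, (i < n)%N -> (g i < n)%N) ->
  (forall i j, (i < n)%N -> (j < n)%N -> g i = g j -> i = j) ->
  \det (\matrix_(i < n, j < n) F (g i) (g j)) = \det (\matrix_(i < n, j < n) F i j).
Proof.
move=> g_lt g_inj.
pose s (i : 'I_n) : 'I_n := Ordinal (g_lt i (ltn_ord i)).
have s_inj : injective s by move=> i j /(congr1 val) /= /g_inj eq_ij; exact/val_inj/eq_ij.
have -> : \matrix_(i < n, j < n) F (g i) (g j)
        = row_perm (perm s_inj) (col_perm (perm s_inj) (\matrix_(i < n, j < n) F i j)).
  by apply/matrixP => i j; rewrite !mxE !permE.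
rewrite row_permE col_permE !det_mulmx !det_perm odd_permV.
by rewrite mulrCA -signr_addb addbb mulr1.
Qed.

Lemma det_swap_block m :
  \det (block_mx 0 1%:M 1%:M 0 : 'M[R]_(m + m)) = (-1) ^+ m.
Proof.
have -> : (block_mx 0 1%:M 1%:M 0 : 'M[R]_(m + m)) =
   block_mx 1%:M 1%:M 0 1%:M *m block_mx 1%:M 0 (-1%:M) 1%:M *m
   block_mx 1%:M 1%:M 0 1%:M *m block_mx (-1%:M) 0 0 1%:M.
  rewrite !mulmx_block !(mul1mx, mulmx1, mul0mx, mulmx0, add0r, addr0, mulNmx, mulmxN).
  by rewrite subrr oppr0 add0r opprK addNr.
rewrite !det_mulmx !det_ublock !det_lblock -scaleN1r detZ !det1.
by rewrite !mul1r !mulr1.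
Qed.

Lemma det_anti_ublock m (X Y Z : 'M[R]_m) :
  \det (block_mx X Y Z 0) = (-1) ^+ m * \det Y * \det Z.
Proof.
have -> : block_mx X Y Z 0 = block_mx Y X 0 Z *m block_mx 0 1%:M 1%:M 0.
  by rewrite mulmx_block !(mul1mx, mulmx1, mul0mx, mulmx0, add0r, addr0).
by rewrite det_mulmx det_ublock det_swap_block mulrC mulrA.
Qed.

Lemma det_anti_lblock m (Y Z W : 'M[R]_m) :
  \det (block_mx 0 Y Z W) = (-1) ^+ m * \det Y * \det Z.
Proof.
have -> : block_mx 0 Y Z W = block_mx 0 1%:M 1%:M 0 *m block_mx Z W 0 Y.
  by rewrite mulmx_block !(mul1mx, mulmx1, mul0mx, mulmx0, add0r, addr0).
by rewrite det_mulmx det_ublock det_swap_block (mulrC (\det Z)) mulrA.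
Qed.

Lemma det_schur_complement1 k p (M : 'M[R]_k) (u : 'M[R]_(k, p)) (v : 'M[R]_(p, k)) :
  \det (block_mx M u v 1%:M) = \det (M - u *m v).
Proof.
have := congr1 determinant (_ : block_mx 1%:M (- u) 0 1%:M *m block_mx M u v 1%:M
                             = block_mx (M - u *m v) 0 v 1%:M).
rewrite det_mulmx det_ublock det_lblock !det1 !mul1r mulr1; apply.
by rewrite mulmx_block !(mul1mx, mulmx1, mul0mx, mulmx0, add0r, addr0, mulNmx, subrr).
Qed.

End BlockDeterminants.

Section Hankel.
Context {R : comPzRingType}.

Definition hankel m n (a : nat -> R) : 'M[R]_(m, n) := \matrix_(i, j) a (i + j)%N.

Lemma eq_hankel {m n} {a b : nat -> R} : a =1 b -> hankel m n a = hankel m n b.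
Proof. by move=> eq_ab; apply/matrixP => i j; rewrite !mxE eq_ab. Qed.

Lemma det_hankel_interleave n c f (a : nat -> R) :
  (c + f = n)%N -> (f <= c <= f.+1)%N ->
  \det (hankel n n a) =
  \det (block_mx (hankel c c (fun k => a k.*2)) (hankel c f (fun k => a k.*2.+1))
                 (hankel f c (fun k => a k.*2.+1)) (hankel f f (fun k => a k.*2.+2))).
Proof.
move=> <- le_fc.
pose g i := if (i < c)%N then i.*2 else (i - c).*2.+1.
rewrite -(@det_mx_reindex _ _ (fun i j => a (i + j)%N) g) => [|i|i j].
2,3: by rewrite /g; repeat case: ifP; lia.
congr (\det _); apply/matrixP => i j; rewrite !mxE.
case: (splitP i) => i' ->; rewrite !mxE; case: (splitP j) => j' ->; rewrite !mxE;
  congr a; move: (ltn_ord i') (ltn_ord j'); rewrite /g; repeat case: ifP; lia.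
Qed.

Lemma det_hankel_even_odd (a : nat -> R) : (forall k, a k.*2.+1 = 0) -> forall n,
  \det (hankel n n a) = \det (hankel (uphalf n) (uphalf n) (fun k => a k.*2))
                       * \det (hankel n./2 n./2 (fun k => a k.*2.+2)).
Proof.
move=> a_odd n; rewrite (@det_hankel_interleave n (uphalf n) n./2); [|lia|lia].
have odd_part0 m p : hankel m p (fun k => a k.*2.+1) = 0.
  by apply/matrixP => i j; rewrite !mxE a_odd.
by rewrite !odd_part0 det_ublock.
Qed.

Lemma det_hankel_double (a : nat -> R) : (forall k, a k.*2.+2 = 0) -> forall m,
  \det (hankel m.*2 m.*2 a) = (-1) ^+ m * \det (hankel m m (fun k => a k.*2.+1)) ^+ 2.
Proof.
move=> a_even m; rewrite (@det_hankel_interleave m.*2 m m); [|lia|lia].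
have -> : hankel m m (fun k => a k.*2.+2) = 0 by apply/matrixP => i j; rewrite !mxE a_even.
by rewrite det_anti_ublock -mulrA -expr2.
Qed.

Lemma det_hankel_double_succ (a : nat -> R) :
  a 0%N = 1 -> (forall k, a k.*2.+2 = 0) -> forall m,
  \det (hankel m.*2.+1 m.*2.+1 a) = (-1) ^+ m * \det (hankel m m (fun k => a k.*2.+3)) ^+ 2.
Proof.
move=> a0 a_even m; rewrite -addnn -(addn1 (m + m)%N).
(* Order the indices as 2, ..., 2m, 1, ..., 2m-1, 0: the entry a 0 = 1 becomes
   the pivot, and eliminating it leaves a block anti-triangular matrix. *)
pose g i := if (i < m)%N then i.*2.+2 else if (i < m + m)%N then (i - m).*2.+1 else 0%N.
rewrite -(@det_mx_reindex _ (m + m + 1)%N (fun i j => a (i + j)%N) g) => [|i|i j].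
2,3: by rewrite /g; repeat case: ifP; lia.
have g_lo (i : 'I_m) : g i = i.*2.+2 by rewrite /g ltn_ord.
have g_hi (i : 'I_m) : g (m + i)%N = i.*2.+1.
  by rewrite /g; move: (ltn_ord i); repeat case: ifP; lia.
have g_last : g (m + m + 0)%N = 0%N by rewrite /g; repeat case: ifP; lia.
set G := (X in \det X = _).
have G_dr : drsubmx G = 1%:M by apply/matrixP => i j; rewrite !mxE !ord1 /= g_last a0.
rewrite -(submxK G) G_dr det_schur_complement1.
have -> : ulsubmx G - ursubmx G *m dlsubmx G =
    block_mx 0 (hankel m m (fun k => a k.*2.+3)) (hankel m m (fun k => a k.*2.+3))
             (\matrix_(i, j) - (a i.*2.+1 * a j.*2.+1)).
  apply/matrixP => i j; rewrite !mxE big_ord1 !mxE /= g_last !addn0.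
  case: (splitP i) => i' ->; rewrite !mxE; case: (splitP j) => j' ->; rewrite !mxE.
  - by rewrite !g_lo !a_even mul0r subr0 -(a_even (i' + j').+1); congr a; lia.
  - by rewrite g_lo g_hi a_even mul0r subr0; congr a; lia.
  - by rewrite g_hi g_lo a_even mulr0 subr0; congr a; lia.
  - by rewrite !g_hi (_ : (i'.*2.+1 + j'.*2.+1 = (i' + j').*2.+2)%N) ?a_even ?sub0r //; lia.
by rewrite det_anti_lblock -mulrA -expr2.
Qed.

End Hankel.

Lemma A0 : A 0 = 1.
Proof. by rewrite /A (_ : isA 0) //; apply/isAP; exists 0%N. Qed.

Lemma A_odd k : A k.*2.+1 = 0.
Proof.
rewrite /A; case: isAP => // -[j]; rewrite expnS.
have : (0 < 2 ^ j)%N by rewrite expn_gt0.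
lia.
Qed.

Lemma A_doubleS k : A k.+1.*2 = A k.
Proof.
rewrite /A; congr (if _ then _ else _); apply/isAP/isAP => -[j k_eq].
- case: j k_eq => [|j]; first by rewrite expn1 doubleS.
  exists j; move: k_eq; rewrite !expnS.
  have : (0 < 2 ^ j)%N by rewrite expn_gt0.
  lia.
- exists j.+1; rewrite k_eq !expnS.
  have : (0 < 2 ^ j)%N by rewrite expn_gt0.
  lia.
Qed.

Definition Aeven (k : nat) : int := A k.*2.

Definition Deven (n : nat) : int := \det (hankel n n Aeven).

Lemma Aeven_S k : Aeven k.+1 = A k.
Proof. exact: A_doubleS. Qed.

Lemma Aeven_odd k : Aeven k.*2.+1 = Aeven k.
Proof. exact: A_doubleS. Qed.

Lemma Aeven_doubleSS k : Aeven k.*2.+2 = 0.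
Proof. by rewrite /Aeven A_doubleS A_odd. Qed.

Lemma D_split n : D n = Deven (uphalf n) * D n./2.
Proof.
rewrite [LHS](det_hankel_even_odd _ A_odd).
by rewrite (eq_hankel (A_doubleS : (fun k => A k.*2.+2) =1 A)).
Qed.

Lemma D_double n : D n.*2 = Deven n * D n.
Proof. by rewrite D_split uphalf_double doubleK. Qed.

Lemma D_double_succ n : D n.*2.+1 = Deven n.+1 * D n.
Proof. by rewrite D_split /= uphalf_double doubleK. Qed.

Lemma Deven_double m : Deven m.*2 = (-1) ^+ m * Deven m ^+ 2.
Proof.
by rewrite [LHS](det_hankel_double _ Aeven_doubleSS) (eq_hankel Aeven_odd).
Qed.

Lemma Deven_double_succ m : Deven m.*2.+1 = (-1) ^+ m * D m ^+ 2.
Proof.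
rewrite [LHS](det_hankel_double_succ Aeven A0 Aeven_doubleSS).
by rewrite (eq_hankel (fun k => etrans (Aeven_odd k.+1) (Aeven_S k))).
Qed.

Lemma D0 : D 0 = 1.
Proof. exact: det_mx00. Qed.

Lemma Deven_sign_D_sqr n : Deven n = (-1) ^+ n./2 /\ D n ^+ 2 = 1.
Proof.
elim/ltn_ind: n => n IH.
have Deven_n : Deven n = (-1) ^+ n./2.
  have [m [n_eq|n_eq]] : exists m, n = m.*2 \/ n = m.*2.+1 by exists n./2; lia.
  - subst n; case: m IH => [|m] IH; first exact: det_mx00.
    by rewrite Deven_double doubleK (IH m.+1 _).1 ?sqrr_sign ?mulr1 //; lia.
  - subst n; rewrite Deven_double_succ /= uphalf_double (IH m _).2 ?mulr1 //; lia.
have Deven_sqr k : (k <= n)%N -> Deven k ^+ 2 = 1.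
  rewrite leq_eqVlt => /predU1P [->|lt_kn]; first by rewrite Deven_n sqrr_sign.
  by rewrite (IH k lt_kn).1 sqrr_sign.
split => //; have [->|n_gt0] := posnP n; first by rewrite D0 expr1n.
by rewrite D_split exprMn Deven_sqr ?(IH _ _).2 ?mulr1 //; lia.
Qed.

Lemma Deven_sign n : Deven n = (-1) ^+ n./2.
Proof. exact: (Deven_sign_D_sqr n).1. Qed.

Lemma D_sqr n : D n ^+ 2 = 1.
Proof. exact: (Deven_sign_D_sqr n).2. Qed.

Lemma Deven_SS n : Deven n.+2 = - Deven n.
Proof. by rewrite !Deven_sign exprS mulN1r. Qed.

Lemma D1 : D 1 = 1.
Proof. by rewrite (D_double_succ 0) Deven_sign D0 mulr1. Qed.

Lemma T_double n : T n.*2 = Deven n * Deven n.+1 * D n * D n.+1.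
Proof. by rewrite /T -doubleS !D_double; ring. Qed.

Lemma T_double_succ n : T n.*2.+1 = - T n.*2.
Proof. by rewrite T_double /T -doubleS !D_double_succ Deven_SS; ring. Qed.

Theorem theorem2p6 :
  [/\ T 0 = 1, T 1 = -1,
      (forall n : nat, (1 <= n)%N -> T (2 * n) = T (2 * n - 1) * T (n - 1))
    & (forall n : nat, T (2 * n + 1) = - T (2 * n))].
Proof.
split.
- by rewrite (T_double 0) D0 D1 !Deven_sign !mulr1.
- by rewrite (T_double_succ 0) (T_double 0) D0 D1 !Deven_sign !mulr1.
- case=> [|n] // _; rewrite !mul2n !subn1 /= T_double_succ !T_double /T Deven_SS.
  by rewrite -[LHS]mulr1 -(D_sqr n); ring.
- by move=> n; rewrite mul2n addn1 T_double_succ.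
Qed.
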